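(* Let $\mathcal{H}$ be a finite family of digraphs containing a directed path $P$ of length $p$. For each $H^*\in\mathcal{H}^+_p$, there exists a subgraph $H'\subseteq H^*$ such that $H'\in GPC(P)$.
   Context: Subgraphs are not necessarily induced. For a digraph $H$, $GPC(H)$ is the set of strongly connected digraphs $H\cup P_1\cup\dots\cup P_\ell$ (union of vertex and arc sets) where each $P_i$ is a directed path with both end-points in $V(H)$ and the ordered end-point pairs of the $P_i$ are pairwise distinct; $\{P_1,\dots,P_\ell\}$ is a witnessing collection of paths. $GPC(\mathcal{H})=\bigcup_{H\in\mathcal{H}}GPC(H)$. $\mathcal{H}^-_p$ is the set of digraphs in $GPC(\mathcal{H})$ admitting a witnessing collection of paths all of length at most $p-1$, and $\mathcal{H}^+_p=GPC(\mathcal{H})\setminus\mathcal{H}^-_p$. Path lengths are measured consistently for $P$ and for witnessing paths. *)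

From mathcomp Require Import all_boot.
Set Implicit Arguments. Unset Strict Implicit. Unset Printing Implicit Defensive.

(* A digraph with vertices in the ambient finite universe T:
   (vertex set, arc set). *)
Notation digraph T := ({set T} * {set (T * T)})%type.

Section Digraphs.
Variable T : finType.

Definition is_digraph (G : digraph T) : bool :=
  [forall a in G.2, [&& a.1 \in G.1, a.2 \in G.1 & a.1 != a.2]].

(* A directed path is encoded by its start vertex x and the remaining
   vertices r, i.e. the vertex sequence x :: r (all distinct). *)
Definition dpath := (T * seq T)%type.
Definition dpath_ok (q : dpath) : bool := uniq (q.1 :: q.2).
Definition dpath_len (q : dpath) : nat := size q.2.
Definition dpath_start (q : dpath) : T := q.1.
Definition dpath_end (q : dpath) : T := last q.1 q.2.
Definition dpath_graph (q : dpath) : digraph T :=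
  ([set x in q.1 :: q.2], [set a | a \in zip (q.1 :: q.2) q.2]).

Definition is_dipath_of_length (G : digraph T) (p : nat) : Prop :=
  exists q : dpath, [/\ dpath_ok q, dpath_len q = p & G = dpath_graph q].

Definition subgraph (H G : digraph T) : bool :=
  (H.1 \subset G.1) && (H.2 \subset G.2).

Definition strongly_connected (G : digraph T) : bool :=
  [forall u in G.1, forall v in G.1, connect (fun x y => (x, y) \in G.2) u v].

(* ps is a witnessing collection of paths for G = H ∪ P_1 ∪ ... ∪ P_l *)
Definition witnessing (H G : digraph T) (ps : seq dpath) : Prop :=
  [/\ all dpath_ok ps,
      all (fun q => (dpath_start q \in H.1) && (dpath_end q \in H.1)) ps,
      uniq [seq (dpath_start q, dpath_end q) | q <- ps] &
      G = (H.1 :|: \bigcup_(q <- ps) (dpath_graph q).1,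
           H.2 :|: \bigcup_(q <- ps) (dpath_graph q).2)].

Definition GPC (H G : digraph T) : Prop :=
  strongly_connected G /\ exists ps, witnessing H G ps.

Definition GPC_fam (Hf : {set digraph T}) (G : digraph T) : Prop :=
  exists2 H, H \in Hf & GPC H G.

(* G ∈ Hf^-_p : witnessing paths all of length <= p-1, i.e. < p *)
Definition Hminus (Hf : {set digraph T}) (p : nat) (G : digraph T) : Prop :=
  exists2 H, H \in Hf &
    strongly_connected G /\
    exists ps, witnessing H G ps /\ all (fun q => dpath_len q < p) ps.

Definition Hplus (Hf : {set digraph T}) (p : nat) (G : digraph T) : Prop :=
  GPC_fam Hf G /\ ~ Hminus Hf p G.

Definition iso (G H : digraph T) : Prop :=
  exists f : T -> T,
    [/\ {in G.1 &, injective f},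
        f @: G.1 = H.1 &
        [set (f a.1, f a.2) | a in G.2] = H.2].

End Digraphs.

From mathcomp Require Import all_boot fingroup perm action primitive_action alt.
Set Implicit Arguments. Unset Strict Implicit. Unset Printing Implicit Defensive.

(* Hstar lies in H^+_p, so one of its witnessing paths has length at least p;
   its initial segment of length p runs from some v0 to some vp. Strong
   connectivity gives a path back from vp to v0, which may be taken simple
   but may meet the segment again (GPC allows this). The union of the two
   paths is a subgraph of Hstar, and a permutation of the vertex universe
   carrying the segment onto P maps this union to P plus one path from the end
   of P to its start: a member of GPC(P). *)

Lemma path_all_zip (T : Type) (e : rel T) x s :
  path e x s = all (fun a => e a.1 a.2) (zip (x :: s) s).
Proof. by elim: s x => //= y s IHs x; rewrite IHs. Qed.

Lemma mem_zip_cons_uniq (T : eqType) x (s : seq T) a :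
  uniq (x :: s) -> a \in zip (x :: s) s ->
  [&& a.1 \in x :: s, a.2 \in x :: s & a.1 != a.2].
Proof.
elim: s x => [|y s IHs] x //= /andP[x_notin ys_uniq].
rewrite in_cons => /orP[/eqP-> /=|/(IHs _ ys_uniq)/and3P[a1 a2 a12]].
  by rewrite !inE !eqxx orbT /=; apply: contraNneq x_notin => ->; apply: mem_head.
by apply/and3P; split => //; rewrite in_cons; apply/orP; right.
Qed.

Lemma zip_map2 (S T : Type) (f : S -> T) (s t : seq S) :
  zip (map f s) (map f t) = map (fun a => (f a.1, f a.2)) (zip s t).
Proof. by elim: s t => [|x s IHs] [|y t] //=; rewrite IHs. Qed.

Lemma imset_mem_seq (S T : finType) (f : S -> T) (s : seq S) :
  f @: [set x in s] = [set y in map f s].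
Proof.
apply/setP => y; rewrite inE; apply/imsetP/mapP => [[x]|[x xs ->]].
  by rewrite inE; exists x.
by exists x; rewrite ?inE.
Qed.

Lemma exists_perm_map (T : finType) (s t : seq T) :
  uniq s -> uniq t -> size s = size t -> exists g : {perm T}, map g s = t.
Proof.
move=> s_uniq t_uniq /esym/eqP t_size.
have s_small : size s <= #|T| by rewrite -(card_uniqP s_uniq) max_card.
have s_dtuple : in_tuple s \in (size s).-dtuple(setT).
  by rewrite inE s_uniq; apply/subsetP.
have t_dtuple : Tuple t_size \in (size s).-dtuple(setT).
  by rewrite inE t_uniq; apply/subsetP.
have [g _ [->]] :=
  atransP2 (ntransitive_weak s_small (Sym_trans T)) s_dtuple t_dtuple.
by exists g.
Qed.

Section DigraphTheory.
Variable T : finType.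
Implicit Types (G H K : digraph T) (q : dpath T) (f : T -> T).

Definition arc_rel G : rel T := fun x y => (x, y) \in G.2.

Definition digraphU G H : digraph T := (G.1 :|: H.1, G.2 :|: H.2).

Definition digraph_map f G : digraph T :=
  (f @: G.1, [set (f a.1, f a.2) | a in G.2]).

Definition dpath_map f q : dpath T := (f q.1, map f q.2).

Definition dpath_take n q : dpath T := (q.1, take n q.2).

Lemma is_digraphU G H :
  is_digraph G -> is_digraph H -> is_digraph (digraphU G H).
Proof.
move=> /forallP G_dg /forallP H_dg; apply/forallP => a; apply/implyP.
rewrite !in_setU => /orP[/(implyP (G_dg a))|/(implyP (H_dg a))] /and3P[-> -> ->];
  by rewrite ?orbT.
Qed.

Lemma subgraphU G H K :
  subgraph G K -> subgraph H K -> subgraph (digraphU G H) K.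
Proof.
by move=> /andP[GK1 GK2] /andP[HK1 HK2]; rewrite /subgraph !subUset GK1 GK2 HK1 HK2.
Qed.

Lemma digraph_is_head G a : is_digraph G -> a \in G.2 -> a.2 \in G.1.
Proof. by move=> /forallP/(_ a)/implyP G_dg /G_dg/and3P[]. Qed.

Lemma strongly_connected_connect G u v :
  strongly_connected G -> u \in G.1 -> v \in G.1 -> connect (arc_rel G) u v.
Proof. by move=> /forallP/(_ u)/implyP SC /SC/forallP/(_ v)/implyP. Qed.

Lemma strongly_connected_root G x :
  (forall u, u \in G.1 -> connect (arc_rel G) x u && connect (arc_rel G) u x) ->
  strongly_connected G.
Proof.
move=> root; apply/forallP => u; apply/implyP => Gu; apply/forallP => v.
apply/implyP => Gv; have /andP[_ ux] := root u Gu; have /andP[xv _] := root v Gv.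
exact: connect_trans ux xv.
Qed.

Lemma mem_dpath_start q : dpath_start q \in (dpath_graph q).1.
Proof. by rewrite inE mem_head. Qed.

Lemma mem_dpath_end q : dpath_end q \in (dpath_graph q).1.
Proof. by rewrite inE mem_last. Qed.

Lemma dpath_graph_is_digraph q : dpath_ok q -> is_digraph (dpath_graph q).
Proof.
move=> q_ok; apply/forallP => a; apply/implyP; rewrite inE.
by move=> /(mem_zip_cons_uniq q_ok); rewrite !inE.
Qed.

Lemma dpath_graph_path q : path (arc_rel (dpath_graph q)) q.1 q.2.
Proof. by rewrite path_all_zip; apply/allP => a; rewrite /arc_rel inE; case: a. Qed.

Lemma subgraph_dpath_graph G q : is_digraph G ->
  subgraph (dpath_graph q) G = (q.1 \in G.1) && path (arc_rel G) q.1 q.2.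
Proof.
move=> G_dg; apply/andP/andP => [[/subsetP V_sub /subsetP A_sub]|[q1G q_path]].
  split; first by apply: V_sub; rewrite inE mem_head.
  by apply: sub_path (dpath_graph_path q) => x y /A_sub.
have A_sub : (dpath_graph q).2 \subset G.2.
  apply/subsetP => -[x y]; rewrite inE => xy.
  by move: q_path; rewrite path_all_zip => /allP/(_ _ xy).
split=> //; apply/subsetP => z; rewrite inE in_cons => /orP[/eqP->//|zq].
have [a a_arc ->] : exists2 a, a \in zip (q.1 :: q.2) q.2 & z = a.2.
  by apply/mapP; change (z \in unzip2 (zip (q.1 :: q.2) q.2)); rewrite unzip2_zip /=.
by apply: (digraph_is_head G_dg); apply: (subsetP A_sub); rewrite inE.
Qed.

Lemma dpath_take_ok n q : dpath_ok q -> dpath_ok (dpath_take n q).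
Proof. exact: take_uniq n.+1. Qed.

Lemma subgraph_dpath_take G n q : is_digraph G ->
  subgraph (dpath_graph q) G -> subgraph (dpath_graph (dpath_take n q)) G.
Proof.
by move=> G_dg; rewrite !subgraph_dpath_graph //= => /andP[-> /(take_path n)->].
Qed.

Lemma connect_dpath G q : (dpath_graph q).2 \subset G.2 ->
  forall z, z \in (dpath_graph q).1 ->
  connect (arc_rel G) (dpath_start q) z && connect (arc_rel G) z (dpath_end q).
Proof.
move=> /subsetP A_sub z; rewrite inE => zq.
have q_path : path (arc_rel G) q.1 q.2.
  by apply: sub_path (dpath_graph_path q) => x y /A_sub.
rewrite (path_connect q_path zq) /dpath_end.
case/splitPl: zq q_path => s1 s2 <-; rewrite cat_path last_cat /= => /andP[_ s2_path].
by apply: (path_connect s2_path); rewrite mem_last.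
Qed.

Lemma connect_dpath_start_end G q : (dpath_graph q).2 \subset G.2 ->
  connect (arc_rel G) (dpath_start q) (dpath_end q).
Proof.
by move=> /connect_dpath/(_ _ (mem_dpath_start q))/andP[].
Qed.

Lemma GPC_dpath_cycle a b :
  dpath_ok b -> dpath_start b = dpath_end a -> dpath_end b = dpath_start a ->
  GPC (dpath_graph a) (digraphU (dpath_graph a) (dpath_graph b)).
Proof.
move=> b_ok b_start b_end; split.
  set G := digraphU _ _.
  have [a_sub b_sub] : (dpath_graph a).2 \subset G.2 /\ (dpath_graph b).2 \subset G.2.
    by split; [apply: subsetUl | apply: subsetUr].
  have a_se := connect_dpath_start_end a_sub.
  have b_se := connect_dpath_start_end b_sub.
  rewrite b_start b_end in b_se *.
  apply: (@strongly_connected_root _ (dpath_start a)) => u.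
  rewrite in_setU => /orP[/(connect_dpath a_sub)/andP[-> ua]|].
    exact: connect_trans ua b_se.
  move=> /(connect_dpath b_sub); rewrite b_start b_end => /andP[bu ->].
  by rewrite (connect_trans a_se bu).
exists [:: b]; split=> //=; last by rewrite !big_seq1.
  by rewrite b_ok.
by rewrite b_start b_end mem_dpath_start mem_dpath_end.
Qed.

Lemma dpath_map_ok f q : injective f -> dpath_ok (dpath_map f q) = dpath_ok q.
Proof. by move=> f_inj; apply: (map_inj_uniq f_inj (q.1 :: q.2)). Qed.

Lemma dpath_start_map f q : dpath_start (dpath_map f q) = f (dpath_start q).
Proof. by []. Qed.

Lemma dpath_end_map f q : dpath_end (dpath_map f q) = f (dpath_end q).
Proof. exact: last_map. Qed.

Lemma digraph_mapU f G H :
  digraph_map f (digraphU G H) = digraphU (digraph_map f G) (digraph_map f H).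
Proof. by rewrite /digraph_map /digraphU /= !imsetU. Qed.

Lemma digraph_map_dpath_graph f q :
  digraph_map f (dpath_graph q) = dpath_graph (dpath_map f q).
Proof. by rewrite /digraph_map /dpath_graph /= !imset_mem_seq -zip_map2. Qed.

Lemma iso_digraph_map (g : {perm T}) G : iso (digraph_map g G) G.
Proof.
exists g^-1%g; split=> /=.
- by move=> x y _ _; apply: perm_inj.
- by rewrite -imset_comp (eq_imset _ (permK g)) imset_id.
- rewrite -imset_comp -[RHS]imset_id; apply: eq_imset => -[x y].
  by rewrite /= !permK.
Qed.

Lemma exists_perm_dpath_map q q' : dpath_ok q -> dpath_ok q' ->
  dpath_len q = dpath_len q' -> exists g : {perm T}, dpath_map g q = q'.
Proof.
case: q q' => [x s] [x' s'] q_ok q'_ok; rewrite /dpath_len /= => len_eq.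
have [|g [gx gs]] := exists_perm_map q_ok q'_ok; first by rewrite /= len_eq.
by exists g; rewrite /dpath_map /= gx gs.
Qed.

Lemma witnessing_is_digraph H G ps :
  is_digraph H -> witnessing H G ps -> is_digraph G.
Proof.
move=> H_dg [ps_ok _ _ ->]; elim: ps ps_ok => [|q ps IHps] /=.
  by rewrite !big_nil !setU0.
move=> /andP[q_ok /IHps ps_dg]; rewrite !big_cons setUCA [H.2 :|: _]setUCA.
exact: is_digraphU (dpath_graph_is_digraph q_ok) ps_dg.
Qed.

Lemma witnessing_subgraph H G ps q :
  witnessing H G ps -> q \in ps -> subgraph (dpath_graph q) G.
Proof.
move=> [_ _ _ ->] qps; rewrite /subgraph !(big_rem _ qps) /=.
by apply/andP; split; rewrite setUCA subsetUl.
Qed.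

Lemma Hplus_long_witness Hf p G : Hplus Hf p G ->
  exists H ps q, [/\ H \in Hf, strongly_connected G, witnessing H G ps,
                     q \in ps & p <= dpath_len q].
Proof.
move=> [[H HHf [G_sc [ps G_wit]]] not_minus].
have /allPn[q qps long_q] : ~~ all (fun q => dpath_len q < p) ps.
  by apply/negP => short; apply: not_minus; exists H => //; split => //; exists ps.
by exists H, ps, q; rewrite leqNgt.
Qed.

Lemma strongly_connected_dpath G x y :
  is_digraph G -> strongly_connected G -> x \in G.1 -> y \in G.1 ->
  exists q, [/\ dpath_ok q, dpath_start q = x, dpath_end q = y
              & subgraph (dpath_graph q) G].
Proof.
move=> G_dg G_sc Gx Gy.
have /connectP[s s_path ->] := strongly_connected_connect G_sc Gx Gy.
case: (shortenP s_path) => s' s'_path s'_uniq _.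
by exists (x, s'); split => //; rewrite subgraph_dpath_graph //= Gx s'_path.
Qed.

End DigraphTheory.

Theorem lemma24 (T : finType) (Hf : {set digraph T}) (P : digraph T) (p : nat) :
  (forall H, H \in Hf -> is_digraph H) ->
  P \in Hf -> is_dipath_of_length P p ->
  forall Hstar : digraph T, Hplus Hf p Hstar ->
  exists H' : digraph T,
    [/\ is_digraph H', subgraph H' Hstar & exists2 G, GPC P G & iso G H'].
Proof.
move=> Hf_dg _ [q0 [q0_ok q0_len ->]] G.
move=> /Hplus_long_witness[H [ps [q [HHf G_sc q_wit qps q_long]]]].
have G_dg := witnessing_is_digraph (Hf_dg H HHf) q_wit.
pose a := dpath_take p q.
have a_ok : dpath_ok a by case: q_wit => /allP/(_ q qps)/(dpath_take_ok p).
have a_sub : subgraph (dpath_graph a) G.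
  exact: subgraph_dpath_take G_dg (witnessing_subgraph q_wit qps).
have a_len : dpath_len a = p by rewrite /dpath_len size_takel.
have /andP[/subsetP a_sub1 _] := a_sub.
have [b [b_ok b_start b_end b_sub]] := strongly_connected_dpath G_dg G_sc
  (a_sub1 _ (mem_dpath_end a)) (a_sub1 _ (mem_dpath_start a)).
have [g ga] := exists_perm_dpath_map a_ok q0_ok (etrans a_len (esym q0_len)).
exists (digraphU (dpath_graph a) (dpath_graph b)); split.
- exact: is_digraphU (dpath_graph_is_digraph a_ok) (dpath_graph_is_digraph b_ok).
- exact: subgraphU a_sub b_sub.
exists (digraph_map g (digraphU (dpath_graph a) (dpath_graph b))); last first.
  exact: iso_digraph_map.
rewrite digraph_mapU !digraph_map_dpath_graph -ga.
apply: GPC_dpath_cycle; rewrite ?dpath_start_map ?dpath_end_map ?b_start ?b_end //.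
by rewrite dpath_map_ok //; apply: perm_inj.
Qed.
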